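(* Let $\mathcal M=(M,<,+,0,\ldots)$ be a definably complete expansion of an ordered group. Let $C\subseteq M^m$ and $P$ be definable sets with $C$ closed and bounded, and let $f:C\times P\to M$ be a definable function. Then $f$ is equi-continuous with respect to $P$ if and only if it is uniformly equi-continuous with respect to $P$.
   Context: ''Definable'' means definable in $\mathcal M$ with parameters; $(M,<)$ is dense without endpoints. Definably complete: every definable subset of $M$ has sup and inf in $M\cup\{\pm\infty\}$. For $x\in M^m$, $|x|$ denotes $\max_i|x_i|$. $f$ is equi-continuous with respect to $P$ if for all $\varepsilon>0$ and $x\in C$ there is $\delta>0$ such that for all $p\in P$ and $x'\in C$, $|x-x'|<\delta$ implies $|f(x,p)-f(x',p)|<\varepsilon$. It is uniformly equi-continuous with respect to $P$ if for all $\varepsilon>0$ there is $\delta>0$ such that for all $p\in P$ and $x,x'\in C$, $|x-x'|<\delta$ implies $|f(x,p)-f(x',p)|<\varepsilon$. *)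

From mathcomp Require Import all_boot all_order all_algebra.
Set Implicit Arguments. Unset Strict Implicit. Unset Printing Implicit Defensive.
Import GRing.Theory.
Local Open Scope ring_scope.

(* An ordered abelian group (written additively) on the zmodType M with strict
   order [lt]; (M,<) is dense without endpoints (standing assumption). *)
Record ordered_group (M : zmodType) (lt : rel M) : Prop := {
  og_irr : forall x, ~~ lt x x;
  og_trans : forall x y z, lt x y -> lt y z -> lt x z;
  og_total : forall x y, [|| lt x y, x == y | lt y x];
  og_add : forall x y z, lt x y -> lt (x + z) (y + z);
  og_dense : forall x y, lt x y -> exists z, lt x z && lt z y;
  og_noright : forall x, exists y, lt x y;
  og_noleft : forall x, exists y, lt y x
}.

(* Points of M^n are lists of length n.  A family [def] of subsets of M^n
   (n : nat) is the family of sets definable with parameters in an expansion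
   of (M,<,+,0) (van den Dries' notion of a structure on M, with all points
   and the graphs of <, + definable). *)
Record expansion (M : zmodType) (lt : rel M)
    (def : nat -> (seq M -> Prop) -> Prop) : Prop := {
  ex_size : forall n A, def n A -> forall s, A s -> size s = n;
  ex_full : forall n, def n (fun s => size s = n);
  ex_compl : forall n A, def n A -> def n (fun s => size s = n /\ ~ A s);
  ex_inter : forall n A B, def n A -> def n B -> def n (fun s => A s /\ B s);
  ex_prodl : forall n A, def n A -> def n.+1 (fun s => exists x t, s = x :: t /\ A t);
  ex_prodr : forall n A, def n A -> def n.+1 (fun s => exists x t, s = rcons t x /\ A t);
  ex_diag : forall n i j, (i < n)%N -> (j < n)%N ->
      def n (fun s => size s = n /\ nth 0 s i = nth 0 s j);
  ex_proj : forall n A, def n.+1 A -> def n (fun t => exists x, A (rcons t x));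
  ex_point : forall a, def 1 (fun s => s = [:: a]);
  ex_lt : def 2 (fun s => exists x y, s = [:: x; y] /\ lt x y);
  ex_add : def 3 (fun s => exists x y, s = [:: x; y; x + y])
}.

Definition le_of (M : zmodType) (lt : rel M) (x y : M) := lt x y || (x == y).

Definition is_sup_ext (M : zmodType) (lt : rel M) (A : M -> Prop) : Prop :=
  (* sup = +oo *) (forall b, exists a, A a /\ ~~ le_of lt a b)
  \/ (* sup = -oo *) (forall a, ~ A a)
  \/ (* sup in M *) (exists s, (forall a, A a -> le_of lt a s) /\
                       (forall b, (forall a, A a -> le_of lt a b) -> le_of lt s b)).

Definition is_inf_ext (M : zmodType) (lt : rel M) (A : M -> Prop) : Prop :=
  (forall b, exists a, A a /\ ~~ le_of lt b a)
  \/ (forall a, ~ A a)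
  \/ (exists s, (forall a, A a -> le_of lt s a) /\
                 (forall b, (forall a, A a -> le_of lt b a) -> le_of lt b s)).

Definition definably_complete (M : zmodType) (lt : rel M)
    (def : nat -> (seq M -> Prop) -> Prop) : Prop :=
  forall A : seq M -> Prop, def 1 A ->
    is_sup_ext lt (fun x => A [:: x]) /\ is_inf_ext lt (fun x => A [:: x]).

Definition gabs (M : zmodType) (lt : rel M) (x : M) : M :=
  if lt x 0 then - x else x.
Definition gmax (M : zmodType) (lt : rel M) (a b : M) : M :=
  if lt a b then b else a.
Definition tnorm (M : zmodType) (lt : rel M) (s : seq M) : M :=
  foldr (fun a acc => gmax lt (gabs lt a) acc) 0 s.
Definition tsub (M : zmodType) (x y : seq M) : seq M :=
  [seq a.1 - a.2 | a <- zip x y].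

Definition closed_set (M : zmodType) (lt : rel M) (m : nat) (C : seq M -> Prop) :=
  forall y, size y = m -> ~ C y ->
    exists e, lt 0 e /\ forall z, size z = m -> lt (tnorm lt (tsub y z)) e -> ~ C z.

Definition bounded_set (M : zmodType) (lt : rel M) (C : seq M -> Prop) :=
  exists B, forall x, C x -> le_of lt (tnorm lt x) B.

Definition equi_continuous (M : zmodType) (lt : rel M) (C P : seq M -> Prop)
    (f : seq M -> seq M -> M) :=
  forall e, lt 0 e -> forall x, C x -> exists d, lt 0 d /\
    forall p x', P p -> C x' -> lt (tnorm lt (tsub x x')) d ->
      lt (gabs lt (f x p - f x' p)) e.

Definition uniformly_equi_continuous (M : zmodType) (lt : rel M) (C P : seq M -> Prop)
    (f : seq M -> seq M -> M) :=
  forall e, lt 0 e -> exists d, lt 0 d /\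
    forall p x x', P p -> C x -> C x' -> lt (tnorm lt (tsub x x')) d ->
      lt (gabs lt (f x p - f x' p)) e.

(* If f is equicontinuous but not uniformly so, then for some e > 0 the set of
   pairs (x, d) for which some x' in C and p in P satisfy |x - x'| < d and
   |f(x, p) - f(x', p)| >= e is definable and meets every fibre d > 0.
   Definable completeness yields a point z approached by such x as d -> 0+:
   take the liminf of the first coordinate, keep the points whose first
   coordinate is d-close to it, and recurse on the remaining coordinates.
   As C is closed, z lies in C, and equicontinuity at z for e/2 contradicts the
   existence of a bad pair (x, x') close to z. *)

From mathcomp Require Import all_boot all_order all_algebra zify.
From Stdlib Require Import Classical FunctionalExtensionality PropExtensionality.
Set Implicit Arguments. Unset Strict Implicit. Unset Printing Implicit Defensive.
Import GRing.Theory.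
Local Open Scope ring_scope.

Lemma nth_cat_addn (T : Type) (x0 : T) (s t : seq T) n i : size s = n ->
  nth x0 (s ++ t) (n + i) = nth x0 t i.
Proof. by move=> <-; rewrite nth_cat ltnNge leq_addr addKn. Qed.

Lemma map_nth_iota_cat (T : Type) (x0 : T) (a b : seq T) n k :
  size a = n -> (k <= size b)%N -> map (nth x0 (a ++ b)) (iota n k) = take k b.
Proof. by move=> ha hk; rewrite map_nth_iota ?(drop_size_cat _ ha) // size_cat ha addKn. Qed.

Lemma map_nth_iota_catl (T : Type) (x0 : T) (s t : seq T) a b : (a + b <= size s)%N ->
  map (nth x0 (s ++ t)) (iota a b) = map (nth x0 s) (iota a b).
Proof.
move=> hab; apply/eq_in_map => i; rewrite mem_iota => /andP [_ hi].
by rewrite nth_cat (leq_trans hi hab).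
Qed.

Lemma seq_split_cat (T : Type) (s : seq T) a b : size s = (a + b)%N ->
  exists x y, [/\ s = x ++ y, size x = a & size y = b].
Proof.
move=> hs; exists (take a s), (drop a s).
rewrite cat_take_drop size_take size_drop hs addKn; split=> //.
by case: ltnP; lia.
Qed.

Section OrderedGroup.
Variables (M : zmodType) (lt : rel M).
Hypothesis hog : ordered_group lt.

(* Throughout, [~~ lt y x] plays the role of [x <= y]. *)

Lemma ltxx x : lt x x = false. Proof. exact/negbTE/(og_irr hog). Qed.

Lemma lt_trans x y z : lt x y -> lt y z -> lt x z. Proof. exact: og_trans. Qed.

Lemma lt_total x y : [\/ lt x y, x = y | lt y x].
Proof.
by case/or3P: (og_total hog x y) => [|/eqP|]; [constructor 1|constructor 2|constructor 3].
Qed.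

Lemma lt_asym x y : lt x y -> ~~ lt y x.
Proof. by move=> hxy; apply/negP => /(lt_trans hxy); rewrite ltxx. Qed.

Lemma lt_le_trans x y z : lt x y -> ~~ lt z y -> lt x z.
Proof.
move=> hxy hyz; case: (lt_total y z) => [|<-|hzy] //; first exact: lt_trans.
by rewrite hzy in hyz.
Qed.

Lemma le_lt_trans x y z : ~~ lt y x -> lt y z -> lt x z.
Proof.
move=> hxy hyz; case: (lt_total x y) => [/lt_trans|->|hyx]; [exact | by [] |].
by rewrite hyx in hxy.
Qed.

Lemma le_trans x y z : ~~ lt y x -> ~~ lt z y -> ~~ lt z x.
Proof. by move=> hxy hyz; apply/negP => /lt_le_trans/(_ hxy) hzy; rewrite hzy in hyz. Qed.

Lemma le_ofE x y : le_of lt x y = ~~ lt y x.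
Proof.
rewrite /le_of; case: (lt_total x y) => [h|->|h]; first by rewrite h (negbTE (lt_asym h)).
  by rewrite eqxx ltxx orbT.
by rewrite h (negbTE (lt_asym h)); apply/eqP => exy; rewrite exy ltxx in h.
Qed.

Lemma ltD2r x y z : lt (x + z) (y + z) = lt x y.
Proof. by apply/idP/idP => [/(og_add hog (- z))|/(og_add hog)//]; rewrite !addrK. Qed.

Lemma ltD2l x y z : lt (z + x) (z + y) = lt x y.
Proof. by rewrite ![z + _]addrC ltD2r. Qed.

Lemma ltDl x r : lt x (x + r) = lt 0 r.
Proof. by rewrite -{1}(addr0 x) ltD2l. Qed.

Lemma ltBl x y z : lt (x - y) z = lt x (y + z).
Proof. by rewrite -(ltD2r _ _ y) subrK addrC. Qed.

Lemma ltNr x y : lt x (- y) = lt y (- x).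
Proof. by rewrite -(ltD2r x _ y) -(ltD2r y _ x) !addNr addrC. Qed.

Lemma gabs_lt a b r : lt (gabs lt (a - b)) r <-> lt a (b + r) /\ lt b (a + r).
Proof.
rewrite /gabs ltBl addr0; case: ifPn => hab; rewrite ?opprB ltBl.
  split=> [hbr|[]//]; split=> //.
  have r0 : lt 0 r by rewrite -(ltDl a) (lt_trans hab hbr).
  by apply: lt_trans hab _; rewrite ltDl.
split=> [har|[]//]; split=> //.
have r0 : lt 0 r by rewrite -(ltDl b) (le_lt_trans hab har).
by apply: le_lt_trans hab _; rewrite ltDl.
Qed.

Lemma gabs_ltC a b r : lt (gabs lt (a - b)) r -> lt (gabs lt (b - a)) r.
Proof. by rewrite !gabs_lt => -[]. Qed.

Lemma gabs_lt_trans a b c r1 r2 : lt (gabs lt (a - b)) r1 -> lt (gabs lt (b - c)) r2 ->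
  lt (gabs lt (a - c)) (r1 + r2).
Proof.
rewrite !gabs_lt => -[hab hba] [hbc hcb].
have chain x y z r r' : lt x (y + r) -> lt y (z + r') -> lt x (z + (r' + r)).
  by move=> hxy hyz; apply: lt_trans hxy _; rewrite addrA ltD2r.
by split; [rewrite [r1 + r2]addrC; apply: chain hab hbc | apply: chain hcb hba].
Qed.

Lemma gabs_le t B : ~~ lt B (gabs lt t) -> ~~ lt B t /\ ~~ lt t (- B).
Proof.
have lt0N u : lt 0 (- u) = lt u 0 by rewrite ltNr oppr0.
rewrite ltNr /gabs; case: ifPn => ht hB; split=> //.
  by apply: le_trans hB; apply: lt_asym (lt_trans ht _); rewrite lt0N.
apply: le_trans hB; apply/negP => /(le_lt_trans ht).
by rewrite lt0N (negbTE ht).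
Qed.

Lemma exists_half e : lt 0 e -> exists e', lt 0 e' /\ ~~ lt e (e' + e').
Proof.
move=> he; have [a /andP [ha0 hae]] := og_dense hog he.
case: (lt_total (a + a) e) => [h|<-|h]; first by exists a; split; last exact: lt_asym.
  by exists a; rewrite ltxx.
exists (e - a); split; first by rewrite -(ltD2r _ _ a) subrK add0r.
apply: lt_asym; rewrite -(ltD2r _ _ (a + a)).
by rewrite addrACA !subrK ltD2l.
Qed.

Lemma exists_min a b : lt 0 a -> lt 0 b ->
  exists c, [/\ lt 0 c, ~~ lt a c & ~~ lt b c].
Proof.
move=> ha hb; case: (boolP (lt a b)) => hab; first by exists a; rewrite ltxx lt_asym.
by exists b; rewrite ltxx.
Qed.

Lemma gmax_lt a b d : lt (gmax lt a b) d <-> lt a d /\ lt b d.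
Proof.
rewrite /gmax; case: ifPn => hab; split=> [h|[]//]; split=> //.
  exact: lt_trans h.
exact: le_lt_trans h.
Qed.

Lemma tnorm_lt x d : lt (tnorm lt x) d <->
  lt 0 d /\ forall i, (i < size x)%N -> lt (gabs lt (nth 0 x i)) d.
Proof.
elim: x => [|a x IH] /=; first by split=> [|[]].
rewrite gmax_lt IH; split=> [[ha [hd hx]]|[hd hx]].
  by split=> // -[|i] //= /hx.
by split; [apply: (hx 0%N) | split=> // i /(hx i.+1)].
Qed.

Lemma tnorm_ge x i : (i < size x)%N -> ~~ lt (tnorm lt x) (gabs lt (nth 0 x i)).
Proof. by move=> hi; apply/negP => /tnorm_lt [_ /(_ i hi)]; rewrite ltxx. Qed.

Lemma nth_tsub (x y : seq M) i : (i < size x)%N -> (i < size y)%N ->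
  nth 0 (tsub x y) i = nth 0 x i - nth 0 y i.
Proof.
move=> hx hy; rewrite (nth_map (0, 0)) ?size_zip ?leq_min ?hx //.
by rewrite nth_zip_cond size_zip leq_min hx hy.
Qed.

Lemma tnorm_tsub_lt x y d : size x = size y ->
  lt (tnorm lt (tsub x y)) d <->
  lt 0 d /\ forall i, (i < size x)%N -> lt (gabs lt (nth 0 x i - nth 0 y i)) d.
Proof.
move=> hxy; rewrite tnorm_lt /tsub size_map size_zip -hxy minnn.
by split=> -[hd h]; split=> // i hi; [rewrite -nth_tsub -?hxy | rewrite nth_tsub -?hxy]; auto.
Qed.

End OrderedGroup.

Section Definable.
Variables (M : zmodType) (lt : rel M) (def : nat -> (seq M -> Prop) -> Prop).
Hypotheses (hog : ordered_group lt) (hex : expansion lt def).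

Lemma def_ext n (A B : seq M -> Prop) : def n A -> (forall s, A s <-> B s) -> def n B.
Proof.
move=> hA hAB; suff -> : B = A by [].
by apply: functional_extensionality => s; apply: propositional_extensionality; split=> /hAB.
Qed.

Lemma def_exists_suffix n j A : def (n + j)%N A ->
  def n (fun s => exists t, size t = j /\ A (s ++ t)).
Proof.
elim: j A => [|j IH] A.
  rewrite addn0 => hA; apply: (def_ext hA) => s; split=> [hs|[t [/size0nil -> ]]].
    by exists [::]; rewrite cats0.
  by rewrite cats0.
rewrite addnS => /(ex_proj hex) /IH hA; apply: (def_ext hA) => s; split.
  case=> t [ht [x hx]]; exists (rcons t x); rewrite size_rcons ht -rcons_cat.
  by split.
case=> t []; case/lastP: t => [//|t x]; rewrite size_rcons => -[ht] hx.
by exists t; split=> //; exists x; rewrite rcons_cat.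
Qed.

Lemma def_drop j n A : def n A -> def (j + n)%N (fun s => size s = (j + n)%N /\ A (drop j s)).
Proof.
move=> hA; elim: j => [|j IH].
  apply: (def_ext hA) => s; rewrite drop0; split=> [hs|[]//].
  by split=> //; apply: (ex_size hex hA).
apply: (def_ext (ex_prodl hex IH)) => s; split.
  by case=> x [t [-> [ht hd]]]; rewrite addSn /= ht.
by case: s => [|x t] [//= [ht] hd]; exists x, t.
Qed.

Lemma def_forall_ltn n N (A : nat -> seq M -> Prop) :
  (forall i, (i < N)%N -> def n (fun s => size s = n /\ A i s)) ->
  def n (fun s => size s = n /\ forall i, (i < N)%N -> A i s).
Proof.
elim: N => [|N IH] hA.
  by apply: (def_ext (ex_full hex n)) => s; split=> [|[]].
have hAN := ex_inter hex (IH (fun i hi => hA i (ltnW hi))) (hA N (ltnSn N)).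
apply: (def_ext hAN) => s; split=> [[[hs hi] [_ hN]]|[hs hi]].
  by split=> // i; rewrite ltnS leq_eqVlt => /predU1P [->|/hi].
by split; split=> //; [move=> i /ltnW /hi | apply: hi].
Qed.

Lemma def_reindex n n' A (sg : seq nat) : def n A -> size sg = n ->
  all (fun i => i < n')%N sg -> def n' (fun s => size s = n' /\ A (map (nth 0 s) sg)).
Proof.
move=> hA hsg hall.
have sg_lt i : (i < n)%N -> (nth 0%N sg i < n')%N.
  by move=> hi; apply: (allP hall); rewrite mem_nth ?hsg.
(* [t = map (nth 0 s) sg] is a conjunction of diagonals on [s ++ t]. *)
pose G (s : seq M) := size s = (n' + n)%N /\
  forall i, (i < n)%N -> nth 0 s (n' + i) = nth 0 s (nth 0%N sg i).
have hG : def (n' + n) G.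
  apply: def_forall_ltn => i hi; apply: (ex_diag hex); first by rewrite ltn_add2l.
  by rewrite ltn_addr ?sg_lt.
apply: (def_ext (def_exists_suffix (ex_inter hex (def_drop n' hA) hG))) => s.
have nth_sg t i : size s = n' -> (i < n)%N ->
    nth 0 (s ++ t) (nth 0%N sg i) = nth 0 s (nth 0%N sg i).
  by move=> hs hi; rewrite nth_cat hs sg_lt.
rewrite /G; split=> [[t [ht [[hst hAt] [_ hGt]]]]|[hs hAs]].
  have hs : size s = n' by move: hst; rewrite size_cat ht; lia.
  suff <- : t = map (nth 0 s) sg by rewrite -hs drop_size_cat in hAt.
  apply: (@eq_from_nth _ 0); first by rewrite size_map hsg.
  move=> i; rewrite ht => hi; rewrite (nth_map 0%N) ?hsg // -(nth_sg t) //.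
  by rewrite -hGt // nth_cat_addn.
exists (map (nth 0 s) sg); rewrite size_cat size_map hsg hs (drop_size_cat _ hs).
split=> //; split=> //; split=> // i hi.
by rewrite nth_cat_addn // nth_sg // (nth_map 0%N) ?hsg.
Qed.

Lemma def_lt n i j : (i < n)%N -> (j < n)%N ->
  def n (fun s => size s = n /\ lt (nth 0 s i) (nth 0 s j)).
Proof.
move=> hi hj; have := def_reindex (ex_lt hex) (sg := [:: i; j]) (n' := n) erefl.
rewrite /= hi hj => /(_ isT) hlt; apply: (def_ext hlt) => s.
by split=> -[hs hst]; split=> //; [case: hst => x [y [[-> ->]]] | exists s`_i, s`_j].
Qed.

Lemma def_lt_add n i j k : (i < n)%N -> (j < n)%N -> (k < n)%N ->
  def n (fun s => size s = n /\ lt (nth 0 s i) (nth 0 s j + nth 0 s k)).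
Proof.
move=> hi hj hk.
(* coordinates [:: a; b; c; w] with [w = b + c] *)
have add_def := def_reindex (ex_add hex) (sg := [:: 1; 2; 3]%N) (n' := 4) erefl isT.
have lt_def := def_lt (n := 4) (i := 0) (j := 3) isT isT.
have lt_add3_def : def 3 (fun s => size s = 3 /\ lt (nth 0 s 0) (nth 0 s 1 + nth 0 s 2)).
  apply: (def_ext (ex_proj hex (ex_inter hex add_def lt_def))) => s; split.
    case=> w [[hs [x [y hxy]]] [_ hlt]]; move: hs; rewrite size_rcons => -[hs].
    split=> //; case: s hs hxy hlt => [|a [|b [|c []]]] //= _.
    by case=> -> -> ->.
  case=> hs hlt; exists (nth 0 s 1 + nth 0 s 2).
  by case: s hs hlt => [|a [|b [|c []]]] //= _ hlt; do !split=> //; exists b, c.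
have := def_reindex lt_add3_def (sg := [:: i; j; k]) (n' := n) erefl.
rewrite /= hi hj hk => /(_ isT) /def_ext; apply=> s.
by split=> [[hs [_ h]]|[hs h]].
Qed.

Lemma def_gabs_lt n i j k : (i < n)%N -> (j < n)%N -> (k < n)%N ->
  def n (fun s => size s = n /\ lt (gabs lt (nth 0 s i - nth 0 s j)) (nth 0 s k)).
Proof.
move=> hi hj hk; have := ex_inter hex (def_lt_add hi hj hk) (def_lt_add hj hi hk).
move/def_ext; apply=> s; rewrite gabs_lt //.
by split=> [[[hs h1] [_ h2]]|[hs [h1 h2]]].
Qed.

Lemma def_fix_last n A c : def n.+1 A -> def n (fun s => A (rcons s c)).
Proof.
move=> hA; have hc := def_drop n (ex_point hex c); rewrite addn1 in hc.
apply: (def_ext (ex_proj hex (ex_inter hex hA hc))) => s.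
have size_s x : size (rcons s x) = n.+1 -> size s = n by rewrite size_rcons => -[].
split=> [[x [hx [/size_s hs]]]|hsc].
  by rewrite -cats1 (drop_size_cat _ hs) => -[<-].
have hs := size_s _ (ex_size hex hA hsc).
by exists c; split=> //; rewrite size_rcons hs -cats1 (drop_size_cat _ hs).
Qed.

Lemma def_gt0 n i : (i < n)%N -> def n (fun s => size s = n /\ lt 0 (nth 0 s i)).
Proof.
move=> hi; have := def_lt (ltnSn n) (ltnW hi : (i < n.+1)%N).
move=> /(def_fix_last 0) /def_ext; apply=> s; rewrite size_rcons !nth_rcons.
split=> [[[hs] h]|[hs h]]; rewrite hs ltnn eqxx hi in h *; by [].
Qed.

End Definable.

Section ClusterPoint.
Variables (M : zmodType) (lt : rel M) (def : nat -> (seq M -> Prop) -> Prop).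
Hypotheses (hog : ordered_group lt) (hex : expansion lt def)
  (hdc : definably_complete lt def).

Definition eventually_above (S : seq M -> Prop) (y : M) := exists d, lt 0 d /\
  forall t d', lt 0 d' -> ~~ lt d d' -> S [:: t; d'] -> ~~ lt t y.

Lemma def_eventually_above S : def 2 S ->
  exists A, def 1 A /\ forall y, A [:: y] <-> eventually_above S y.
Proof.
move=> hS.
(* coordinates [:: y; d; t; d'] *)
have pos_def := def_gt0 hex (n := 4) (i := 3) isT.
have le_def := ex_compl hex (def_lt hex (n := 4) (i := 1) (j := 3) isT isT).
have S_def := def_reindex hex hS (sg := [:: 2; 3]%N) (n' := 4) erefl isT.
have below_def := def_lt hex (n := 4) (i := 2) (j := 0) isT isT.
have witness_def := def_exists_suffix hex (n := 2) (j := 2)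
  (ex_inter hex pos_def (ex_inter hex le_def (ex_inter hex S_def below_def))).
have d_def := def_gt0 hex (n := 2) (i := 1) isT.
have A_def := ex_proj hex (ex_inter hex d_def (ex_compl hex witness_def)).
eexists; split; first exact: A_def.
move=> y; split.
  case=> d [[_ hd] [_ hnot]]; exists d; split=> // t d' hd' hd'd hSt; apply/negP => hty.
  by apply: hnot; exists [:: t; d']; do !split=> //; case=> _; exact/negP.
case=> d [hd hev]; exists d; split=> //.
split=> // -[td [+ H]]; case: td H => [|t [|d' []]] //=.
move=> [[_ hd'] [[_ hd'd] [[_ hSt] [_ hty]]]] _.
have hd'_le_d : ~~ lt d d' by apply/negP => ?; apply: hd'd.
by move: (hev t d' hd' hd'_le_d hSt); rewrite hty.
Qed.

Definition cluster_point (S : seq M -> Prop) (z : seq M) :=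
  forall r d, lt 0 r -> lt 0 d -> exists x d',
    [/\ lt 0 d', ~~ lt d d', S (rcons x d') &
      forall i, (i < size z)%N -> lt (gabs lt (nth 0 x i - nth 0 z i)) r].

(* [a] is the liminf as [d -> 0+] of the values [t] with [S [:: t; d]]. *)
Lemma cluster_value_exists S B : def 2 S ->
  (forall t d, S [:: t; d] -> ~~ lt B (gabs lt t)) ->
  (forall d, lt 0 d -> exists t, S [:: t; d]) ->
  exists a, cluster_point S [:: a].
Proof.
move=> hS hB hne; have [A [hA hAS]] := def_eventually_above hS.
have [hsup _] := hdc hA.
have eA : (fun y => A [:: y]) = eventually_above S.
  by apply: functional_extensionality => y; apply: propositional_extensionality.
rewrite {}eA in hsup.
have below_B y : eventually_above S y -> ~~ lt B y.
  case=> d [hd hev]; have [t ht] := hne d hd.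
  apply: (le_trans hog (y := t)); first exact: hev t d hd (negbT (ltxx hog d)) ht.
  exact: proj1 (gabs_le hog (hB _ _ ht)).
case: hsup => [hinf|[hemp|[a [hub hlub]]]].
- have [b [/below_B hbB]] := hinf B; by rewrite le_ofE // hbB.
- have [d1 hd1] := og_noright hog 0.
  by case: (hemp (- B)); exists d1; split=> // t d' _ _ /hB /(gabs_le hog) [].
exists a => r d hr hd.
have [y [[d0 [hd0 hev]] hya]] : exists y, eventually_above S y /\ lt (a - r) y.
  apply: NNPP => hnot.
  suff : le_of lt a (a - r) by rewrite le_ofE // (ltBl hog) addrC (ltDl hog) hr.
  apply: hlub => y hy; rewrite le_ofE //; apply/negP => hya; apply: hnot; by exists y.
have [d2 [hd2 hd2d hd2d0]] := exists_min hog hd hd0.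
have [t [d' [hd' hd'd2 hS' hta]]] :
    exists t d', [/\ lt 0 d', ~~ lt d2 d', S [:: t; d'] & lt t (a + r)].
  apply: NNPP => hnot.
  suff : le_of lt (a + r) a by rewrite le_ofE // (ltDl hog) hr.
  apply: hub; exists d2; split=> // t d' hd' hd'd2 hS'; apply/negP => hta.
  by apply: hnot; exists t, d'.
exists [:: t], d'; split=> //; first exact: (le_trans hog hd'd2 hd2d).
case=> // _; apply/(gabs_lt hog); split=> //.
rewrite /= addrC -(ltBl hog); apply: (lt_le_trans hog hya).
exact: (hev t d' hd' (le_trans hog hd'd2 hd2d0) hS').
Qed.

Definition head_param n (S : seq M -> Prop) : seq M -> Prop := fun s =>
  exists u d rest, [/\ s = [:: u; d], size rest = n & S (rcons (u :: rest) d)].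

Lemma def_head_param n S : def n.+2 S -> def 2 (head_param n S).
Proof.
move=> hS; have := def_reindex hex hS (sg := 0%N :: iota 2 n ++ [:: 1%N]) (n' := (2 + n)%N).
rewrite /= size_cat size_iota addn1 all_cat /= andbT => /(_ erefl).
have -> : all (fun i => i < 2 + n)%N (iota 2 n).
  by apply/allP => i; rewrite mem_iota => /andP [_ ->].
move=> /(_ isT) hSr; apply: (def_ext (def_exists_suffix hex hSr)) => s; split.
  case=> rest [hrest [hs hSs]]; have : size s = 2 by move: hs; rewrite size_cat hrest; lia.
  case: s hs hSs => [|u [|d []]] // _.
  rewrite map_cat map_nth_iota /= ?drop0 ?take_oversize ?hrest ?cats1 //; last lia.
  by move=> hS' _; exists u, d, rest.
case=> u [d [rest [-> hrest hS']]]; exists rest; split; first by [].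
rewrite size_cat hrest map_cat map_nth_iota /= ?drop0 ?take_oversize ?hrest ?cats1 //; lia.
Qed.

Definition shrink_head (S : seq M -> Prop) a : seq M -> Prop := fun s =>
  exists rest d u d', [/\ s = rcons rest d, lt 0 d', ~~ lt d d',
    lt (gabs lt (u - a)) d & S (rcons (u :: rest) d')].

Lemma shrink_head_layout n (a : M) rest d u d' : size rest = n ->
  [/\ rcons (rcons rest d) a ++ [:: u; d'] = rest ++ [:: d; a; u; d'],
    size (rest ++ [:: d; a; u; d']) = (n.+2 + 2)%N &
    map (nth 0 (rest ++ [:: d; a; u; d'])) ((n + 2)%N :: iota 0 n ++ [:: (n + 3)%N]) =
      rcons (u :: rest) d'].
Proof.
move=> hrest; rewrite -!cats1 -!catA size_cat hrest /= map_cat /=.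
rewrite !(nth_cat_addn _ _ _ hrest) map_nth_iota0 ?(take_size_cat _ hrest) ?cats1 //.
  by split=> //; lia.
by rewrite size_cat hrest leq_addr.
Qed.

Lemma def_shrink_head n S a : def n.+2 S -> def n.+1 (shrink_head S a).
Proof.
move=> hS.
(* coordinates [rest ++ [:: d; a; u; d']] *)
have Nlt j : (j < 4)%N -> (n + j < n + 4)%N by rewrite ltn_add2l.
have pos_def := def_gt0 hex (Nlt 3%N isT).
have le_def := ex_compl hex (def_lt hex (Nlt 0%N isT) (Nlt 3%N isT)).
have near_def := def_gabs_lt hog hex (Nlt 2%N isT) (Nlt 1%N isT) (Nlt 0%N isT).
have S_def : def (n + 4) (fun s => size s = (n + 4)%N /\
    S (map (nth 0 s) ((n + 2)%N :: iota 0 n ++ [:: (n + 3)%N]))).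
  apply: (def_reindex hex hS (sg := (n + 2)%N :: iota 0 n ++ [:: (n + 3)%N])).
    by rewrite /= size_cat size_iota addn1.
  rewrite /= all_cat /= andbT; apply/and3P; split; try exact: Nlt.
  by apply/allP => i; rewrite mem_iota; lia.
have := ex_inter hex pos_def (ex_inter hex le_def (ex_inter hex near_def S_def)).
rewrite (_ : (n + 4)%N = (n.+2 + 2)%N); last lia.
move=> /(def_exists_suffix hex) /(def_fix_last hex a) /def_ext; apply=> s.
split=> [[t [ht H]]|[rest [d [u [d' [-> hd' hd'd hua hSu]]]]]].
  have hs : size s = n.+1.
    by move: H => [[+ _] _]; rewrite size_cat !size_rcons ht; lia.
  case/lastP: s hs H => [//|rest d]; rewrite size_rcons => -[hrest].
  case: t ht => [|u [|d' []]] // _.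
  have [-> hE ->] := shrink_head_layout a d u d' hrest.
  rewrite hE !(nth_cat_addn _ _ _ hrest) /=.
  move=> [[_ hd'] [[_ hd'd] [[_ hua] [_ hSu]]]].
  exists rest, d, u, d'; split=> //; apply/negP => hdd'; exact: hd'd.
have hrest : size rest = n.
  by have := ex_size hex hS hSu; rewrite size_rcons => -[].
exists [:: u; d']; have [-> hE ->] := shrink_head_layout a d u d' hrest.
rewrite hE !(nth_cat_addn _ _ _ hrest).
by do !split=> //; case=> _; apply/negP.
Qed.

Lemma cluster_point_cons S a z : cluster_point (shrink_head S a) z -> cluster_point S (a :: z).
Proof.
move=> hz r d hr hd; have [d0 [hd0 hd0r hd0d]] := exists_min hog hr hd.
have [x [d1 [_ hd1d0 [rest [d2 [u [d' [/rcons_inj [-> <-] hd' hd'd1 hua hS]]]]] hxz]]] :=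
  hz r d0 hr hd0.
exists (u :: rest), d'; split=> //; first exact: (le_trans hog (le_trans hog hd'd1 hd1d0) hd0d).
case=> [_|i /hxz] //=; exact: (lt_le_trans hog hua (le_trans hog hd1d0 hd0r)).
Qed.

Lemma cluster_point_exists n S B : def n.+1 S ->
  (forall x d, S (rcons x d) -> forall i, (i < n)%N -> ~~ lt B (gabs lt (nth 0 x i))) ->
  (forall d, lt 0 d -> exists x, S (rcons x d)) ->
  exists z, size z = n /\ cluster_point S z.
Proof.
elim: n S => [|n IH] S hS hB hne.
  exists [::]; split=> // r d hr hd; have [x hx] := hne d hd.
  by exists x, d; split=> //; exact: negbT (ltxx hog d).
have [a ha] : exists a, cluster_point (head_param n S) [:: a].
  apply: (cluster_value_exists (def_head_param hS)) => [t d [u [d' [rest [[<- <-] _ hSt]]]]|d hd].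
    exact: hB hSt 0%N isT.
  have [[|u rest] hx] := hne d hd; first by have := ex_size hex hS hx.
  exists u, u, d, rest; split=> //.
  by have := ex_size hex hS hx; rewrite size_rcons => -[].
have [z [hz hcl]] : exists z, size z = n /\ cluster_point (shrink_head S a) z.
  apply: IH (def_shrink_head a hS) _ _ => [x d|d hd].
    case=> rest [d1 [u [d' [/rcons_inj [-> _] _ _ _ hSu]]]] i hi.
    exact: hB hSu i.+1 hi.
  have [x [d' [hd' hd'd hH hxa]]] := ha d d hd hd.
  case: hH => u [d1 [rest [hx hrest hSu]]].
  case/rcons_inj: (hx : rcons x d' = rcons [:: u] d1) => ? ?; subst.
  by exists rest, rest, d, u, d1; split=> //; exact: hxa 0%N isT.
by exists (a :: z); split; [rewrite /= hz | apply: cluster_point_cons].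
Qed.

End ClusterPoint.

Section EquiContinuity.
Variables (M : zmodType) (lt : rel M) (def : nat -> (seq M -> Prop) -> Prop).
Hypotheses (hog : ordered_group lt) (hex : expansion lt def).
Variables (m k : nat) (C P : seq M -> Prop) (f : seq M -> seq M -> M).

Definition graph_of (s : seq M) := exists x p, C x /\ P p /\ s = x ++ p ++ [:: f x p].

Hypotheses (hC : def m C) (hP : def k P) (hf : def (m + k + 1)%N graph_of).

Lemma graph_of_inv x p u : size x = m -> size p = k ->
  graph_of (x ++ p ++ [:: u]) -> [/\ C x, P p & u = f x p].
Proof.
move=> hx hp [x0 [p0 [hx0 [hp0 /eqP]]]].
rewrite eqseq_cat ?hx ?(ex_size hex hC hx0) // => /andP [/eqP -> ].
by rewrite eqseq_cat ?hp ?(ex_size hex hP hp0) // => /andP [/eqP -> /eqP [->]].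
Qed.

Definition far_values e : seq M -> Prop := fun s => exists x p x',
  [/\ s = x ++ p ++ x', C x, P p, C x' & ~ lt (gabs lt (f x p - f x' p)) e].

Lemma far_values_layout (e : M) (x p x' : seq M) u v : size x = m -> size p = k -> size x' = m ->
  [/\ rcons (x ++ p ++ x') e ++ [:: u; v] = (x ++ p ++ x') ++ [:: e; u; v],
    size (x ++ p ++ x') = (m + k + m)%N,
    size ((x ++ p ++ x') ++ [:: e; u; v]) = ((m + k + m).+1 + 2)%N,
    map (nth 0 ((x ++ p ++ x') ++ [:: e; u; v]))
      (iota 0 m ++ iota m k ++ [:: (m + k + m + 1)%N]) = x ++ p ++ [:: u] &
    map (nth 0 ((x ++ p ++ x') ++ [:: e; u; v]))
      (iota (m + k) m ++ iota m k ++ [:: (m + k + m + 2)%N]) = x' ++ p ++ [:: v]].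
Proof.
move=> hx hp hx'; rewrite -cats1 -catA.
have hL : size (x ++ p ++ x') = (m + k + m)%N by rewrite !size_cat hx hp hx' addnA.
rewrite !map_cat /= !(nth_cat_addn _ _ _ hL) !(@map_nth_iota_catl _ 0 (x ++ p ++ x')) ?hL;
  try lia.
rewrite map_nth_iota0 ?(take_size_cat _ hx) ?size_cat ?hx ?leq_addr //.
rewrite (map_nth_iota_cat _ hx) ?(take_size_cat _ hp) ?size_cat ?hp ?leq_addr //.
rewrite [x ++ p ++ x']catA (map_nth_iota_cat _ (_ : size (x ++ p) = (m + k)%N));
  rewrite ?size_cat ?hx ?hp ?hx' //.
by rewrite take_oversize ?hx' //=; split=> //; lia.
Qed.

Lemma def_far_values e : def (m + k + m) (far_values e).
Proof.
(* coordinates [x ++ p ++ x' ++ [:: e; u; v]] *)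
have all_iota a b : (a + b <= m + k + m + 3)%N ->
    all (fun i => i < m + k + m + 3)%N (iota a b).
  by move=> hab; apply/allP => i; rewrite mem_iota; lia.
have graph_u_def : def (m + k + m + 3) (fun s => size s = (m + k + m + 3)%N /\
    graph_of (map (nth 0 s) (iota 0 m ++ iota m k ++ [:: (m + k + m + 1)%N]))).
  apply: (def_reindex hex hf); first by rewrite !size_cat !size_iota addnA.
  by rewrite !all_cat !all_iota /= ?andbT; lia.
have graph_v_def : def (m + k + m + 3) (fun s => size s = (m + k + m + 3)%N /\
    graph_of (map (nth 0 s) (iota (m + k) m ++ iota m k ++ [:: (m + k + m + 2)%N]))).
  apply: (def_reindex hex hf); first by rewrite !size_cat !size_iota addnA.
  by rewrite !all_cat !all_iota /= ?andbT; lia.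
have far_def := ex_compl hex (def_gabs_lt hog hex (n := (m + k + m + 3)%N)
  (i := (m + k + m + 1)%N) (j := (m + k + m + 2)%N) (k := (m + k + m + 0)%N)
  ltac:(lia) ltac:(lia) ltac:(lia)).
have := ex_inter hex graph_u_def (ex_inter hex graph_v_def far_def).
rewrite (_ : (m + k + m + 3)%N = ((m + k + m).+1 + 2)%N); last lia.
move=> /(def_exists_suffix hex) /(def_fix_last hex e) /def_ext; apply=> s.
split=> [[t [ht [[hsz gu] [[_ gv] [_ far]]]]]|[x [p [x' [-> xC pP x'C hfar]]]]].
  have hs : size s = (m + (k + m))%N by move: hsz; rewrite size_cat size_rcons ht; lia.
  have [x [px' [es hx /seq_split_cat [p [x' [epx' hp hx']]]]]] := seq_split_cat hs.
  subst s px'; case: t ht hsz gu gv far => [|u [|v []]] // _ _.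
  have [-> hL hE -> ->] := far_values_layout e u v hx hp hx'.
  rewrite hE !(nth_cat_addn _ _ _ hL) /=.
  move=> /(graph_of_inv hx hp) [xC pP ->] /(graph_of_inv hx' hp) [x'C _ ->] far.
  by exists x, p, x'; split=> // hlt; apply: far.
have hx := ex_size hex hC xC; have hp := ex_size hex hP pP; have hx' := ex_size hex hC x'C.
exists [:: f x p; f x' p].
have [-> hL hE -> ->] := far_values_layout e (f x p) (f x' p) hx hp hx'.
rewrite hE !(nth_cat_addn _ _ _ hL) /=.
have graph_fx y : C y -> graph_of (y ++ p ++ [:: f y p]) by exists y, p.
by do !split=> //; [exact: graph_fx | exact: graph_fx | case].
Qed.

Definition bad_pairs e : seq M -> Prop := fun s => exists x d, s = rcons x d /\ C x /\
  exists p x', [/\ P p, C x', lt (tnorm lt (tsub x x')) d & ~ lt (gabs lt (f x p - f x' p)) e].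

Lemma bad_pairs_layout (x : seq M) d (p x' : seq M) :
  size x = m -> size p = k -> size x' = m ->
  [/\ size (rcons x d ++ p ++ x') = (m.+1 + (k + m))%N,
    map (nth 0 (rcons x d ++ p ++ x')) (iota 0 m ++ iota m.+1 (k + m)) = x ++ p ++ x',
    nth 0 (rcons x d ++ p ++ x') m = d &
    forall i, (i < m)%N -> nth 0 (rcons x d ++ p ++ x') i = nth 0 x i /\
      nth 0 (rcons x d ++ p ++ x') (m.+1 + k + i) = nth 0 x' i].
Proof.
move=> hx hp hx'; have hxd : size (rcons x d) = m.+1 by rewrite size_rcons hx.
have hxdp : size (rcons x d ++ p) = (m.+1 + k)%N by rewrite size_cat hxd hp.
split.
- by rewrite !size_cat hxd hp hx'.
- rewrite map_cat (map_nth_iota_cat _ hxd) ?size_cat ?hp ?hx' //.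
  rewrite take_oversize ?size_cat ?hp ?hx' // map_nth_iota0; last first.
    by rewrite !size_cat hxd; lia.
  by rewrite -cats1 -catA take_size_cat.
- by rewrite -cats1 -catA nth_cat hx ltnn subnn.
move=> i hi; split; first by rewrite -cats1 -catA nth_cat hx hi.
by rewrite catA (nth_cat_addn _ _ _ hxdp).
Qed.

Lemma def_bad_pairs e : def m.+1 (bad_pairs e).
Proof.
(* coordinates [x ++ [:: d] ++ p ++ x'] *)
set N := (m.+1 + (k + m))%N.
have far_def : def N (fun s => size s = N /\
    far_values e (map (nth 0 s) (iota 0 m ++ iota m.+1 (k + m)))).
  apply: (def_reindex hex (def_far_values e)); first by rewrite size_cat !size_iota addnA.
  by rewrite all_cat; apply/andP; split; apply/allP => i; rewrite mem_iota /N; lia.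
have pos_def := def_gt0 hex (n := N) (i := m) ltac:(rewrite /N; lia).
have near_def : def N (fun s => size s = N /\ forall i, (i < m)%N ->
    lt (gabs lt (nth 0 s i - nth 0 s (m.+1 + k + i))) (nth 0 s m)).
  by apply: (def_forall_ltn hex) => i hi; apply: (def_gabs_lt hog hex); rewrite /N; lia.
have := ex_inter hex far_def (ex_inter hex pos_def near_def).
move=> /(def_exists_suffix hex) /def_ext; apply=> s.
split=> [[t [ht [[hsz far] [[_ hd] [_ near]]]]]|[x [d [-> [xC [p [x' [pP x'C hxx' hfar]]]]]]]].
  have hs : size s = m.+1 by move: hsz; rewrite size_cat ht /N; lia.
  case/lastP: s hs hsz far hd near => [//|x d]; rewrite size_rcons => -[hx] _.
  have [p [x' [-> hp hx']]] := seq_split_cat ht.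
  have [_ -> -> near_i] := bad_pairs_layout d hx hp hx'.
  case=> x0 [p0 [x0' [e0 x0C p0P x0'C hfar]]] hd near.
  have sx : size x = size x0 by rewrite hx (ex_size hex hC x0C).
  have sp : size p = size p0 by rewrite hp (ex_size hex hP p0P).
  move/eqP: e0; rewrite (eqseq_cat _ _ sx) (eqseq_cat _ _ sp).
  case/and3P => /eqP ex /eqP ep /eqP ex'; subst x0 p0 x0'.
  exists x, d; do 2!split=> //; exists p, x'; split=> //.
  apply/(tnorm_tsub_lt hog); first by rewrite hx hx'.
  by split=> // i; rewrite hx => hi; have [<- <-] := near_i i hi; apply: near.
have hx := ex_size hex hC xC; have hp := ex_size hex hP pP; have hx' := ex_size hex hC x'C.
have /(tnorm_tsub_lt hog) [|hd near] := hxx'; first by rewrite hx hx'.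
exists (p ++ x'); have [hsz -> -> near_i] := bad_pairs_layout d hx hp hx'.
rewrite size_cat hp hx' hsz; do !split=> //.
  by exists x, p, x'.
by move=> i hi; have [-> ->] := near_i i hi; apply: near; rewrite hx.
Qed.

Lemma bad_pairs_fibres e :
  (forall d, lt 0 d -> ~ forall p x x', P p -> C x -> C x' ->
     lt (tnorm lt (tsub x x')) d -> lt (gabs lt (f x p - f x' p)) e) ->
  forall d, lt 0 d -> exists x, bad_pairs e (rcons x d).
Proof.
move=> hnot d hd; apply: NNPP => hno; apply: (hnot d hd) => p x x' pP xC x'C hxx'.
by apply: NNPP => hfar; apply: hno; exists x, x, d; split=> //; split=> //; exists p, x'.
Qed.

Lemma cluster_point_bad_mem e z : closed_set lt m C -> size z = m ->
  cluster_point lt (bad_pairs e) z -> C z.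
Proof.
move=> hCc hz hcl; apply: NNPP => hzC; have [r [hr hfar]] := hCc z hz hzC.
have [x [d' [_ _ [x0 [d0 [/rcons_inj [<- _] [xC _]]]] hxz]]] := hcl r r hr hr.
have hx := ex_size hex hC xC.
apply: (hfar x hx _ xC); apply/(tnorm_tsub_lt hog); first by rewrite hz hx.
by split=> // i hi; apply: (gabs_ltC hog); apply: hxz.
Qed.

Lemma equi_continuous_no_bad_cluster e z : equi_continuous lt C P f -> lt 0 e -> C z ->
  ~ cluster_point lt (bad_pairs e) z.
Proof.
move=> hE he zC hcl; have [e' [he' he'e]] := exists_half hog he.
have [r [hr hrE]] := hE e' he' z zC; have [r' [hr' hr'r]] := exists_half hog hr.
have [x [d [hd hdr' [x0 [d0 [/rcons_inj [<- <-] [xC [p [x' [pP x'C hxx' hfar]]]]]]] hxz]]] :=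
  hcl r' r' hr' hr'.
have hz := ex_size hex hC zC; have hx := ex_size hex hC xC; have hx' := ex_size hex hC x'C.
have /(tnorm_tsub_lt hog) [|_ hxx'_i] := hxx'; first by rewrite hx hx'.
have near_z y : C y -> (forall i, (i < m)%N -> lt (gabs lt (nth 0 z i - nth 0 y i)) r) ->
    lt (gabs lt (f z p - f y p)) e'.
  move=> yC near; apply: hrE => //; apply/(tnorm_tsub_lt hog).
    by rewrite hz (ex_size hex hC yC).
  by split=> // i; rewrite hz; apply: near.
have hzx i : (i < m)%N -> lt (gabs lt (nth 0 z i - nth 0 x i)) r'.
  by move=> hi; apply: (gabs_ltC hog); apply: hxz; rewrite hz.
apply: hfar; apply: (lt_le_trans hog _ he'e); apply: (gabs_lt_trans hog (gabs_ltC hog _)).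
  apply: near_z => // i hi; apply: (lt_le_trans hog (hzx i hi)).
  by apply: (lt_asym hog); apply: (lt_le_trans hog _ hr'r); rewrite (ltDl hog).
apply: near_z => // i hi; apply: (lt_le_trans hog _ hr'r).
apply: (lt_le_trans hog (gabs_lt_trans hog (hzx i hi) (hxx'_i i _))); first by rewrite hx.
by rewrite (ltD2l hog).
Qed.

Lemma equi_continuous_uniform : definably_complete lt def ->
  closed_set lt m C -> bounded_set lt C ->
  equi_continuous lt C P f -> uniformly_equi_continuous lt C P f.
Proof.
move=> hdc hCc [B hB] hE e he; apply: NNPP => hnU.
have hne := bad_pairs_fibres (fun d hd hU => hnU (ex_intro _ d (conj hd hU))).
have bounded x d : bad_pairs e (rcons x d) -> forall i, (i < m)%N ->
    ~~ lt B (gabs lt (nth 0 x i)).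
  case=> x0 [d0 [/rcons_inj [<- _] [xC _]]] i hi.
  apply: (le_trans hog (tnorm_ge hog _)); last by rewrite -(le_ofE hog) hB.
  by rewrite (ex_size hex hC xC).
have [z [hz hcl]] := cluster_point_exists hog hex hdc (def_bad_pairs e) bounded hne.
exact: equi_continuous_no_bad_cluster hE he (cluster_point_bad_mem hCc hz hcl) hcl.
Qed.

End EquiContinuity.

Lemma uniform_equi_continuousW (M : zmodType) (lt : rel M) (C P : seq M -> Prop)
    (f : seq M -> seq M -> M) :
  uniformly_equi_continuous lt C P f -> equi_continuous lt C P f.
Proof.
move=> hU e he x xC; have [d [hd hdU]] := hU e he.
by exists d; split=> // p x' pP x'C; apply: hdU.
Qed.

Theorem proposition2p7 (M : zmodType) (lt : rel M)
    (def : nat -> (seq M -> Prop) -> Prop)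
    (hog : ordered_group lt) (hex : expansion lt def)
    (hdc : definably_complete lt def)
    (m k : nat) (C P : seq M -> Prop) (f : seq M -> seq M -> M)
    (hC : def m C) (hP : def k P)
    (hCc : closed_set lt m C) (hCb : bounded_set lt C)
    (hf : def (m + k + 1)%N
            (fun s => exists x p, C x /\ P p /\ s = x ++ p ++ [:: f x p])) :
  equi_continuous lt C P f <-> uniformly_equi_continuous lt C P f.
Proof.
split; last exact: uniform_equi_continuousW.
exact: (equi_continuous_uniform hog hex hC hP hf hdc hCc hCb).
Qed.
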